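(* Let $\Gamma$ be a discrete group, $N$ a normal subgroup with finite quotient $\tilde\Gamma=\Gamma/N$, $r\ge1$, and $f=\sum_\gamma a_\gamma\gamma\in M_r(\mathbb{Z}\Gamma)$ with image $\tilde f=\sum_\gamma a_\gamma\tilde\gamma\in M_r(\mathbb{Z}\tilde\Gamma)$. Then $\rho_{\tilde f}$ is an automorphism of $(\mathbb{Q}\tilde\Gamma)^r$ if and only if $\mathrm{Fix}_N(X_f)$ is finite, and in this case $|\mathrm{Fix}_N(X_f)|=\pm\det\rho_{\tilde f}$.
   Context: $T=(\mathbb{R}/\mathbb{Z})^r$. For $f=\sum_\gamma a_\gamma\gamma$ with $a_\gamma\in M_r(\mathbb{Z})$ (almost all zero), $X_f\subset T^\Gamma$ is the closed subgroup of all $(x_{\gamma'})$ (entries as row vectors) with $\sum_{\gamma'}x_{\gamma'}a^T_{\gamma^{-1}\gamma'}=0$ in $T$ for all $\gamma$, where $a^T$ is the transpose; $\Gamma$ acts by $\gamma\cdot(x_{\gamma'})=(x_{\gamma^{-1}\gamma'})$, and $\mathrm{Fix}_N(X_f)$ is the set of points fixed by every element of $N$. For a finite group $G$, a field $K\supseteq\mathbb{Q}$ and $h=\sum_g b_g g\in M_r(KG)$, set $h^*=\sum_g b^T_{g^{-1}}g$; $\rho_h$ is the $K$-linear endomorphism $x\mapsto xh^*$ of $(KG)^r$ (row vectors), and $\det\rho_h$ its determinant over $K$. *)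

From HB Require Import structures.
From mathcomp Require Import all_boot all_order all_algebra all_fingroup.
From mathcomp Require Import all_classical all_reals.
Set Implicit Arguments. Unset Strict Implicit. Unset Printing Implicit Defensive.
Import Order.TTheory GRing.Theory Num.Theory.
Local Open Scope ring_scope.

(* An element f = sum_gamma a_gamma gamma of M_r(Z Gamma) is given by a finite
   list of pairs (gamma_i, A_i) with f = sum_i A_i gamma_i (repetitions allowed,
   so that a_gamma = sum_{i | gamma_i = gamma} A_i). *)
Definition ZGmat (Gam : groupType) (r : nat) := seq (Gam * 'M[int]_r)%type.

(* The torus T = (R/Z)^r: an element is represented by its unique
   representative row vector with entries in [0,1). *)
Definition torus_rep (R : realType) (r : nat) (v : 'rV[R]_r) : Prop :=
  forall j, 0 <= v 0 j /\ v 0 j < 1.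

(* X_f: all (x_gamma') in T^Gamma with sum_gamma' x_gamma' a^T_{gamma^-1 gamma'} = 0
   in T for every gamma.  Substituting gamma' = gamma * gamma_i, this sum is
   sum_i x_{gamma gamma_i} A_i^T, and it vanishes in R/Z iff all coordinates of
   the real sum are integers. *)
Definition Xf (R : realType) (Gam : groupType) (r : nat) (f : ZGmat Gam r)
  : set (Gam -> 'rV[R]_r) :=
  [set x | (forall g, torus_rep (x g)) /\
     forall g : Gam, forall j : 'I_r,
       (\sum_(p <- f) (x (g * p.1)%g *m (map_mx (fun z : int => z%:~R) p.2)^T)) 0 j
         \is a Num.int].

Definition FixN (R : realType) (Gam : groupType) (r : nat) (N : set Gam)
  (X : set (Gam -> 'rV[R]_r)) : set (Gam -> 'rV[R]_r) :=
  [set x | X x /\ forall n, N n -> forall g, x (n^-1 * g)%g = x g].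

(* Group algebra K G for a finite group G, elements = coefficient functions. *)
Definition ga_mul (K : fieldType) (G : finGroupType) (p q : G -> K) : G -> K :=
  fun u => \sum_(g : G) p g * q (g^-1 * u)%g.

(* h = sum_g b_g g in M_r(KG) is given by b : G -> 'M_r; h^* = sum_g b^T_{g^-1} g *)
Definition hstar (K : fieldType) (G : finGroupType) (r : nat) (b : G -> 'M[K]_r)
  : G -> 'M[K]_r := fun g => (b g^-1%g)^T.

(* rho_h : (KG)^r -> (KG)^r, x |-> x h^*  (x a row vector of elements of KG) *)
Definition rho (K : fieldType) (G : finGroupType) (r : nat) (b : G -> 'M[K]_r)
  (x : 'I_r -> G -> K) : 'I_r -> G -> K :=
  fun k => fun u => \sum_(j < r) ga_mul (x j) (fun g => hstar b g j k) u.

Definition ga_coord (K : fieldType) (G : finGroupType) (r : nat)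
  (x : 'I_r -> G -> K) : 'rV[K]_#|{: 'I_r * G}| :=
  \row_i (let p := enum_val i in x p.1 p.2).
Definition ga_uncoord (K : fieldType) (G : finGroupType) (r : nat)
  (v : 'rV[K]_#|{: 'I_r * G}|) : 'I_r -> G -> K :=
  fun j g => v 0 (enum_rank (j, g)).

Definition det_rho (K : fieldType) (G : finGroupType) (r : nat) (b : G -> 'M[K]_r) : K :=
  \det (lin1_mx (fun v => ga_coord (rho b (ga_uncoord v)))).

Definition ftilde (Gam : groupType) (G : finGroupType) (r : nat)
  (phi : Gam -> G) (f : ZGmat Gam r) : G -> 'M[rat]_r :=
  fun g => \sum_(p <- f | phi p.1 == g) map_mx (fun z : int => z%:~R) p.2.

From HB Require Import structures.
From mathcomp Require Import all_boot all_order all_algebra all_fingroup.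
From mathcomp Require Import all_classical all_reals.
Import Order.TTheory GRing.Theory Num.Theory.
Set Implicit Arguments. Unset Strict Implicit. Unset Printing Implicit Defensive.
Local Open Scope ring_scope.
Local Open Scope classical_set_scope.
Local Open Scope card_scope.

(* Ordering the basis [{e_j g}] of [(K G)^r] by the pairs [(j, g)], the map
   [rho_{\tilde f}] is right multiplication by a single integer matrix [M] of size
   [r|G|], so it is bijective iff [det M != 0], and [det rho = det M].  An
   [N]-invariant point of [X_f] is a function on [G = Gam/N], i.e. a vector [v] of
   [T^{r|G|}], and the equations of [X_f] say exactly that [v M = 0] in the torus.
   By the Smith normal form, [M = P D Q] with [P], [Q] unimodular; these act as
   automorphisms of the torus, so the kernel of [M] is equinumerous with that of
   the diagonal matrix [D], a grid of [prod_i |d_i| = |det M|] points when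
   [det M != 0], and an infinite set when some [d_i] vanishes. *)

Local Notation intmx := (map_mx (fun z : int => z%:~R)).

Lemma card_eq_can2 T U (A : set T) (B : set U) (f : T -> U) (g : U -> T) :
  (forall x, A x -> B (f x)) -> (forall y, B y -> A (g y)) ->
  (forall x, A x -> g (f x) = x) -> (forall y, B y -> f (g y) = y) -> A #= B.
Proof.
move=> fAB gBA gK fK.
have -> : B = f @` A.
  apply/seteqP; split=> [y By|_ [x Ax <-]]; last exact: fAB.
  by exists (g y); [apply: gBA|apply: fK].
apply/card_esym/inj_card_eq => x y /set_mem Ax /set_mem Ay fxy.
by rewrite -(gK _ Ax) -(gK _ Ay) fxy.
Qed.

Lemma card_setT_ord (T : finType) : [set: T] #= `I_#|T|.
Proof.
apply: card_eq_trans (card_esym card_II).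
by apply: (card_eq_can2 (f := enum_rank) (g := enum_val)) => // x _;
  rewrite ?enum_rankK ?enum_valK.
Qed.

Section TorusKernel.
Variable R : realType.

Definition int_row m (v : 'rV[R]_m) := forall j, v 0 j \is a Num.int.

Definition torus_kernel m (M : 'M[int]_m) : set 'rV[R]_m :=
  [set v | torus_rep v /\ int_row (v *m intmx M)].

Lemma int_rowD m (v w : 'rV[R]_m) : int_row v -> int_row w -> int_row (v + w).
Proof. by move=> iv iw j; rewrite mxE rpredD. Qed.

Lemma int_rowN m (v : 'rV[R]_m) : int_row v -> int_row (- v).
Proof. by move=> iv j; rewrite mxE rpredN. Qed.

Lemma int_row_mulmx m n (v : 'rV[R]_m) (P : 'M[int]_(m, n)) :
  int_row v -> int_row (v *m intmx P).
Proof.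
move=> iv j; rewrite mxE; apply: rpred_sum => k _.
by rewrite mxE rpredM // intr_int.
Qed.

Definition floor_row m (v : 'rV[R]_m) : 'rV[R]_m := \row_j (Num.floor (v 0 j))%:~R.
Definition frac_row m (v : 'rV[R]_m) := v - floor_row v.

Lemma int_row_floor m (v : 'rV[R]_m) : int_row (floor_row v).
Proof. by move=> j; rewrite mxE intr_int. Qed.

Lemma torus_rep_frac m (v : 'rV[R]_m) : torus_rep (frac_row v).
Proof.
move=> j; rewrite !mxE subr_ge0 floor_le ltrBlDl; split=> //.
by have := floorD1_gt (v 0 j); rewrite intrD.
Qed.

Lemma frac_row_id m (v : 'rV[R]_m) : torus_rep v -> frac_row v = v.
Proof.
move=> tv; apply/matrixP => i j; rewrite [i]ord1 !mxE.
have [v0 v1] := tv j.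
by rewrite (@floor_def _ _ 0) ?subr0 // v0 add0r.
Qed.

Lemma frac_rowDr m (v w : 'rV[R]_m) : int_row w -> frac_row (v + w) = frac_row v.
Proof.
move=> iw; apply/matrixP => i j; rewrite [i]ord1 !mxE floorDrz // intrD.
by rewrite (floorK (iw j)) opprD addrACA subrr addr0.
Qed.

Lemma frac_row_mulmx m n (v : 'rV[R]_m) (P : 'M[int]_(m, n)) :
  frac_row (frac_row v *m intmx P) = frac_row (v *m intmx P).
Proof.
rewrite [frac_row v]/frac_row mulmxBl frac_rowDr //.
exact/int_rowN/int_row_mulmx/int_row_floor.
Qed.

Lemma int_row_frac_mulmx m n (v : 'rV[R]_m) (P : 'M[int]_(m, n)) :
  int_row (v *m intmx P) -> int_row (frac_row v *m intmx P).
Proof.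
move=> iv; rewrite [frac_row v]/frac_row mulmxBl; apply: int_rowD => //.
exact/int_rowN/int_row_mulmx/int_row_floor.
Qed.

Lemma intmx_mulV m (P : 'M[int]_m) :
  P \in unitmx -> intmx P *m intmx (invmx P) = 1%:M :> 'M[R]_m.
Proof. by move=> uP; rewrite -map_mxM mulmxV // map_mx1. Qed.

Lemma intmx_Vmul m (P : 'M[int]_m) :
  P \in unitmx -> intmx (invmx P) *m intmx P = 1%:M :> 'M[R]_m.
Proof. by move=> uP; rewrite -map_mxM mulVmx // map_mx1. Qed.

Lemma torus_kernel_mulmxr m (M P : 'M[int]_m) :
  P \in unitmx -> torus_kernel (M *m P) = torus_kernel M.
Proof.
move=> uP; apply/seteqP; split=> v [tv iv]; split=> //; last first.
  by rewrite map_mxM mulmxA; apply: int_row_mulmx.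
have := int_row_mulmx (invmx P) iv.
by rewrite map_mxM mulmxA -(mulmxA _ (intmx P)) intmx_mulV // mulmx1.
Qed.

(* Unlike right multiplication, a unimodular left factor moves the kernel by the
   torus automorphism [x |-> x P]. *)
Lemma card_torus_kernel_mulmxl m (P M : 'M[int]_m) :
  P \in unitmx -> torus_kernel (P *m M) #= torus_kernel M.
Proof.
move=> uP; apply: (card_eq_can2 (f := fun v => frac_row (v *m intmx P))
                                (g := fun w => frac_row (w *m intmx (invmx P)))).
- move=> v [_ iv]; split; first exact: torus_rep_frac.
  by apply: int_row_frac_mulmx; rewrite -mulmxA -map_mxM.
- move=> w [_ iw]; split; first exact: torus_rep_frac.
  apply: int_row_frac_mulmx.
  by rewrite map_mxM !mulmxA -(mulmxA w) intmx_Vmul // mulmx1.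
- by move=> v [tv _]; rewrite frac_row_mulmx -mulmxA intmx_mulV // mulmx1 frac_row_id.
- by move=> w [tw _]; rewrite frac_row_mulmx -mulmxA intmx_Vmul // mulmx1 frac_row_id.
Qed.

Lemma intmx_diag_row m (d : 'rV[int]_m) (v : 'rV[R]_m) j :
  (v *m intmx (diag_mx d)) 0 j = v 0 j * (d 0 j)%:~R.
Proof. by rewrite map_diag_mx mul_mx_diag !mxE. Qed.

Lemma torus_kernel_diag_infinite m (d : 'rV[int]_m) j0 :
  d 0 j0 = 0 -> infinite_set (torus_kernel (diag_mx d)).
Proof.
move=> dj0; pose u (n : nat) : 'rV[R]_m := \row_j (if j == j0 then n.+2%:R^-1 else 0).
have uS : u @` [set: nat] `<=` torus_kernel (diag_mx d).
  move=> _ [n _ <-]; split.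
    move=> j; rewrite mxE; case: (j == j0); last by rewrite lexx ltr01.
    by rewrite invr_ge0 ler0n invf_lt1 ?ltr0n // ltr1n.
  move=> j; rewrite intmx_diag_row mxE.
  by case: (j =P j0) => [->|_]; rewrite ?dj0 ?mulr0 ?mul0r rpred0.
apply: (sub_infinite_set uS); rewrite (eq_finite_set (inj_card_eq _)).
  exact: infinite_nat.
move=> a b _ _ /(congr1 (fun v : 'rV[R]_m => v 0 j0)); rewrite !mxE eqxx.
by move/invr_inj/eqP; rewrite eqr_nat !eqSS => /eqP.
Qed.

(* With [e j = |d j|], the kernel is the grid [prod_j {k / e j | k < e j}]. *)
Lemma card_torus_kernel_diag m (d : 'rV[int]_m) : (forall j, d 0 j != 0) ->
  torus_kernel (diag_mx d) #= `I_(\prod_j absz (d 0 j)%R).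
Proof.
move=> dn0; pose e j := absz (d 0 j).
have e_gt0 j : (0 < e j)%N by rewrite absz_gt0.
have eR_neq0 j : (e j)%:R != 0 :> R by rewrite pnatr_eq0 -lt0n.
have dE j : (d 0 j)%:~R = (sgz (d 0 j))%:~R * (e j)%:R :> R.
  by rewrite {1}[d 0 j]intEsg intrM.
pose grid := {dffun forall j, 'I_(e j)}.
pose pt (k : grid) : 'rV[R]_m := \row_j ((k j)%:R / (e j)%:R).
have -> : torus_kernel (diag_mx d) = pt @` [set: grid].
  apply/seteqP; split=> [v [tv iv]|_ [k _ <-]]; last first.
    split=> j.
      by rewrite mxE divr_ge0 ?ler0n // ltr_pdivrMr ?ltr0n // mul1r ltr_nat.
    rewrite intmx_diag_row mxE dE mulrCA mulfVK // rpredM ?intr_int //.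
    by rewrite -[(k j)%:R]/((Posz (k j))%:~R) intr_int.
  have ve_int j : v 0 j * (e j)%:R \is a Num.int.
    have -> : (e j)%:R = (d 0 j)%:~R * (sgz (d 0 j))%:~R :> R.
      by rewrite -intrM mulrC -abszEsg.
    by rewrite mulrA -intmx_diag_row rpredM ?intr_int.
  pose k j := absz (Num.floor (v 0 j * (e j)%:R)).
  have kE j : (k j)%:R = v 0 j * (e j)%:R.
    rewrite /k natr_absz ger0_norm ?floorK //.
    by rewrite floor_ge0 mulr_ge0 ?ler0n //; case: (tv j).
  have k_lt j : (k j < e j)%N.
    by rewrite -(ltr_nat R) kE gtr_pMl ?ltr0n //; case: (tv j).
  exists [ffun j => Ordinal (k_lt j)] => //.
  by apply/matrixP => i j; rewrite [i]ord1 !mxE ffunE /= kE mulfK.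
rewrite (card_eql (inj_card_eq _)); last first.
  move=> k k' _ _ kk'; apply/ffunP => j; apply/val_inj/eqP; rewrite -(eqr_nat R).
  have /(congr1 (fun t => t * (e j)%:R)) := congr1 (fun v : 'rV[R]_m => v 0 j) kk'.
  by rewrite !mxE !mulfVK // => ->.
apply: card_eq_trans (card_setT_ord grid) _.
rewrite card_dep_ffun; apply/card_eq_II.
by rewrite foldrE big_map big_enum; apply: eq_bigr => j _; rewrite card_ord.
Qed.

Lemma absz_det_unitmx m (P : 'M[int]_m) : P \in unitmx -> absz (\det P) = 1%N.
Proof.
rewrite unitmxE => /unitrPr [y /(congr1 absz)]; rewrite abszM /=.
by move/eqP; rewrite muln_eq1 => /andP[/eqP -> _].
Qed.

Lemma torus_kernel_Smith m (M : 'M[int]_m) : exists d : 'rV[int]_m,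
  torus_kernel M #= torus_kernel (diag_mx d) /\
  absz (\det M) = (\prod_j absz (d 0 j)%R)%N.
Proof.
have [P uP [Q uQ [d _ ->]]] := int_Smith_normal_form M.
exists (\row_i d`_i).
have -> : \matrix_(i, j) (d`_i *+ (i == j :> nat)) = diag_mx (\row_i d`_i) :> 'M_m.
  by apply/matrixP => i j; rewrite !mxE eqn_leq -eqn_leq.
rewrite torus_kernel_mulmxr // card_torus_kernel_mulmxl //; split=> //.
rewrite !det_mulmx det_diag !abszM !absz_det_unitmx // mul1n muln1.
by rewrite (big_morph absz abszM (erefl (absz 1))).
Qed.

Lemma card_torus_kernel m (M : 'M[int]_m) :
  \det M != 0 -> torus_kernel M #= `I_(absz (\det M)).
Proof.
have [d [Md detE]] := torus_kernel_Smith M => detM_neq0.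
rewrite detE; apply: card_eq_trans Md (card_torus_kernel_diag _) => j.
apply: contraNneq detM_neq0 => dj0.
by rewrite -absz_eq0 detE (bigD1 j) //= dj0 mul0n.
Qed.

Lemma torus_kernel_det0_infinite m (M : 'M[int]_m) :
  \det M = 0 -> infinite_set (torus_kernel M).
Proof.
have [d [/eq_finite_set -> detE]] := torus_kernel_Smith M => detM0.
move: detE; rewrite detM0 /= => /esym/eqP; rewrite prod_nat_seq_eq0 => /hasP[j _ /= dj0].
by apply: (torus_kernel_diag_infinite (j0 := j)); apply/eqP; rewrite -absz_eq0.
Qed.

End TorusKernel.

Section RhoMatrix.
Variables (Gam : groupType) (G : finGroupType) (phi : Gam -> G) (r : nat).
Variable f : ZGmat Gam r.

Definition ftilde_over (K : fieldType) : G -> 'M[K]_r :=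
  fun g => \sum_(p <- f | phi p.1 == g) intmx p.2.

(* The entry at [((j, g), (k, u))] is the coefficient of [e_k u] in [rho (e_j g)],
   namely the [(k, j)] entry of [\tilde f] at [u^-1 g]. *)
Definition rho_intmx : 'M[int]_#|{: 'I_r * G}| :=
  \matrix_(i, i') (let: (j, g) := enum_val i in let: (k, u) := enum_val i' in
     \sum_(p <- f | phi p.1 == (u^-1 * g)%g) p.2 k j).

Lemma ga_coordK (K : fieldType) : cancel (@ga_coord K G r) (@ga_uncoord K G r).
Proof.
move=> x; apply: funext => j; apply: funext => g.
by rewrite /ga_uncoord /ga_coord mxE enum_rankK.
Qed.

Lemma ga_uncoordK (K : fieldType) : cancel (@ga_uncoord K G r) (@ga_coord K G r).
Proof.
move=> v; apply/matrixP => i i'; rewrite [i]ord1 /ga_uncoord /ga_coord mxE.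
by rewrite -surjective_pairing enum_valK.
Qed.

Lemma ga_coord_rho (K : fieldType) (v : 'rV[K]_#|{: 'I_r * G}|) :
  ga_coord (rho (ftilde_over K) (ga_uncoord v)) = v *m intmx rho_intmx.
Proof.
apply/matrixP => i i'; rewrite [i]ord1 !mxE; case Ei' : (enum_val i') => [k u] /=.
rewrite (reindex_onto enum_rank enum_val) /=; last by move=> t _; rewrite enum_valK.
rewrite (eq_bigl xpredT) => [|t]; last by rewrite enum_rankK eqxx.
rewrite /rho /ga_mul pair_big /=; apply: eq_bigr => -[j g] _ /=.
rewrite /ga_uncoord /hstar !mxE enum_rankK Ei' invMg invgK /ftilde_over summxE.
by rewrite rmorph_sum; congr (_ * _); apply: eq_bigr => p _; rewrite mxE.
Qed.

Lemma rhoE (K : fieldType) (x : 'I_r -> G -> K) :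
  rho (ftilde_over K) x = ga_uncoord (ga_coord x *m intmx rho_intmx).
Proof. by rewrite -ga_coord_rho !ga_coordK. Qed.

Lemma det_intmx n (M : 'M[int]_n) : \det (intmx M) = (\det M)%:~R :> rat.
Proof. exact: (det_map_mx (intr : {rmorphism int -> rat})). Qed.

Lemma det_rho_ftilde : det_rho (ftilde phi f) = (\det rho_intmx)%:~R.
Proof.
rewrite /det_rho -det_intmx; congr (\det _); apply/matrixP => i j.
by rewrite mxE ga_coord_rho -rowE mxE.
Qed.

Lemma bijective_rho_ftilde : bijective (rho (ftilde phi f)) <-> \det rho_intmx != 0.
Proof.
rewrite -[ftilde phi f]/(ftilde_over rat); split.
  move=> [rho_inv rhoK _]; apply: contraTneq isT => det0.
  have /det0P[v v_neq0 vM0] : \det (intmx rho_intmx) == 0 :> rat.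
    by rewrite det_intmx det0.
  have : rho (ftilde_over rat) (ga_uncoord v) = rho (ftilde_over rat) (ga_uncoord 0).
    by rewrite !rhoE !ga_uncoordK vM0 mul0mx.
  move/(congr1 rho_inv); rewrite !rhoK => /(congr1 (@ga_coord _ _ _)).
  by rewrite !ga_uncoordK => v0; rewrite v0 eqxx in v_neq0.
move=> det_neq0.
have uM : (intmx rho_intmx : 'M[rat]_#|{: 'I_r * G}|) \in unitmx.
  by rewrite unitmxE det_intmx unitfE intr_eq0.
exists (fun x => ga_uncoord (ga_coord x *m invmx (intmx rho_intmx))) => x.
  by rewrite rhoE ga_uncoordK mulmxK // ga_coordK.
by rewrite rhoE ga_uncoordK mulmxKV // ga_coordK.
Qed.

End RhoMatrix.

Section FixedPoints.
Variables (Gam : groupType) (G : finGroupType) (phi : Gam -> G).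
Hypothesis phiM : forall a b : Gam, phi (a * b)%g = (phi a * phi b)%g.
Variable r : nat.
Variable f : ZGmat Gam r.

Lemma Xf_sum_rho (K : fieldType) (x : Gam -> 'rV[K]_r) (y : 'I_r -> G -> K) :
  (forall c j, x c 0 j = y j (phi c)) -> forall c k,
  (\sum_(p <- f) x (c * p.1)%g *m (intmx p.2)^T) 0 k =
    rho (ftilde_over phi f K) y k (phi c).
Proof.
move=> xy c k; rewrite summxE.
rewrite (eq_bigr (fun p : Gam * 'M[int]_r =>
  \sum_j y j (phi c * phi p.1)%g * (p.2 k j)%:~R)); last first.
  by move=> p _; rewrite mxE; apply: eq_bigr => j _; rewrite !mxE xy phiM.
rewrite exchange_big; apply: eq_bigr => j _; rewrite /ga_mul.
under [RHS]eq_bigr => g _ do rewrite /hstar mxE invMg invgK summxE mulr_sumr big_mkcond /=.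
rewrite exchange_big /=; apply: eq_bigr => p _.
rewrite (bigD1 (phi c * phi p.1)%g) //= mulKg eqxx mxE big1 ?addr0 // => g ne_g.
by case: eqP => // Eg; rewrite Eg mulKVg eqxx in ne_g.
Qed.

Lemma phi1 : phi 1%g = 1%g.
Proof. by apply: (mulgI (phi 1%g)); rewrite -phiM !mulg1. Qed.

Lemma phiV a : phi a^-1%g = (phi a)^-1%g.
Proof. by apply/esym/mulg1_eq; rewrite -phiM mulgV phi1. Qed.

Hypothesis phi_surj : forall g : G, exists a : Gam, phi a = g.
Variable N : set Gam.
Hypothesis HN : forall n : Gam, N n <-> phi n = 1%g.

Definition phi_sec (g : G) : Gam := projT1 (cid (phi_surj g)).

Lemma phi_secK : cancel phi_sec phi.
Proof. by move=> g; rewrite /phi_sec; case: cid. Qed.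

Lemma FixN_phi_sec (R : realType) (x : Gam -> 'rV[R]_r) :
  FixN N (Xf f) x -> forall c, x (phi_sec (phi c)) = x c.
Proof.
move=> [_ xN] c; have Nc : N (c * (phi_sec (phi c))^-1)%g.
  by apply/HN; rewrite phiM phiV phi_secK mulgV.
by have := xN _ Nc c; rewrite invMg invgK mulgKV.
Qed.

Lemma card_FixN_torus_kernel (R : realType) :
  FixN N (Xf (R:=R) f) #= torus_kernel (R:=R) (rho_intmx phi f).
Proof.
pose down (x : Gam -> 'rV[R]_r) := ga_coord (fun j g => x (phi_sec g) 0 j).
pose up (v : 'rV[R]_#|{: 'I_r * G}|) c := \row_j ga_uncoord v j (phi c).
apply: (card_eq_can2 (f := down) (g := up)).
- move=> x xF; split=> [i|i'].
    by rewrite /down /ga_coord mxE; exact: (xF.1.1 (phi_sec _)).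
  rewrite -ga_coord_rho ga_coordK /ga_coord mxE -{1}(phi_secK (enum_val i').2).
  rewrite -(Xf_sum_rho (x := x)); first exact: (xF.1.2 (phi_sec _)).
  by move=> c j; rewrite -(FixN_phi_sec xF c).
- move=> v [tv iv]; split; first split.
  + by move=> c j; rewrite mxE; exact: tv.
  + move=> c k; rewrite (Xf_sum_rho (y := ga_uncoord v)) => [|c' j]; last by rewrite mxE.
    by have := iv (enum_rank (k, phi c)); rewrite -ga_coord_rho /ga_coord mxE enum_rankK.
  + move=> n Nn c; apply/matrixP => i j.
    by rewrite !mxE phiM phiV (proj1 (HN n) Nn) invg1 mul1g.
- move=> x xF; apply: funext => c; apply/matrixP => i j.
  by rewrite [i]ord1 mxE /ga_uncoord /down /ga_coord mxE enum_rankK /= FixN_phi_sec.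
- move=> v _; rewrite -[RHS]ga_uncoordK /down; congr ga_coord.
  by apply: funext => j; apply: funext => g; rewrite mxE phi_secK.
Qed.

End FixedPoints.

Unset Implicit Arguments.

Theorem proposition2p1 (R : realType) (Gam : groupType) (G : finGroupType)
  (phi : Gam -> G)
  (phiM : forall a b : Gam, phi (a * b)%g = (phi a * phi b)%g)
  (phi_surj : forall g : G, exists a : Gam, phi a = g)
  (N : set Gam) (HN : forall n : Gam, N n <-> phi n = 1%g)
  (r : nat) (hr : (0 < r)%N) (f : ZGmat Gam r) :
  (bijective (rho (ftilde phi f)) <-> finite_set (FixN N (Xf (R:=R) f))) /\
  (finite_set (FixN N (Xf (R:=R) f)) ->
     exists n : nat, (FixN N (Xf (R:=R) f) #= `I_n) /\
       ((n%:R : rat) = det_rho (ftilde phi f) \/ (n%:R : rat) = - det_rho (ftilde phi f))).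
Proof.
have FixE := card_FixN_torus_kernel phiM f phi_surj HN R.
set M := rho_intmx phi f in FixE.
have finite_FixN : finite_set (FixN N (Xf (R:=R) f)) <-> \det M != 0.
  rewrite (eq_finite_set FixE); split=> [fin|detM_neq0].
    by apply/eqP => /(torus_kernel_det0_infinite (R:=R)); apply.
  by apply/finite_setP; exists (absz (\det M)); exact: card_torus_kernel.
split; first by rewrite finite_FixN; exact: bijective_rho_ftilde.
move=> /finite_FixN detM_neq0; exists (absz (\det M)); split.
  exact: card_eq_trans FixE (card_torus_kernel R detM_neq0).
rewrite det_rho_ftilde -/M natr_absz.
have [detM_ge0|detM_lt0] := lerP 0 (\det M).
  by left; rewrite ger0_norm.
by right; rewrite ltr0_norm // mulrNz.
Qed.
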